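(* Let $R$ be a commutative domain, $I,J\subseteq R$ two non-zero ideals such that $IJ$ can be generated by $3$ elements, and $\mathfrak m\subseteq R$ a maximal ideal. Then at least one of the following occurs: (1) there exists a non-zero $x\in I_{\mathfrak m}$ such that $(IJ)_{\mathfrak m}/xJ_{\mathfrak m}$ is a cyclic $R_{\mathfrak m}$-module generated by the class of an element of the form $ij$ with $i\in I_{\mathfrak m}$, $j\in J_{\mathfrak m}$; (2) there exists a non-zero $y\in J_{\mathfrak m}$ such that $(IJ)_{\mathfrak m}/yI_{\mathfrak m}$ is a cyclic $R_{\mathfrak m}$-module generated by the class of an element of the form $ij$ with $i\in I_{\mathfrak m}$, $j\in J_{\mathfrak m}$. In particular, if (1) holds (with generator the class of $ij$) then the $R_{\mathfrak m}$-module morphism $I_{\mathfrak m}/xR_{\mathfrak m}\to (IJ)_{\mathfrak m}/xJ_{\mathfrak m}$ induced by multiplication by $j$ is surjective; and if (2) holds (with generator the class of $ij$) then the $R_{\mathfrak m}$-module morphism $J_{\mathfrak m}/yR_{\mathfrak m}\to (IJ)_{\mathfrak m}/yI_{\mathfrak m}$ induced by multiplication by $i$ is surjective.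
   Context: $R_{\mathfrak m}$, $I_{\mathfrak m}$, $J_{\mathfrak m}$, $(IJ)_{\mathfrak m}$ denote localizations at $\mathfrak m$. *)

From HB Require Import structures.
From mathcomp Require Import all_boot all_order all_algebra.
Set Implicit Arguments. Unset Strict Implicit. Unset Printing Implicit Defensive.
Import GRing.Theory.
Local Open Scope ring_scope.

Definition is_ideal (R : comRingType) (I : R -> Prop) : Prop :=
  [/\ I 0, (forall a b, I a -> I b -> I (a + b)) & (forall r a, I a -> I (r * a))].

Definition nonzero_ideal (R : comRingType) (I : R -> Prop) : Prop :=
  is_ideal I /\ exists a, I a /\ a != 0.

Definition maximal_ideal (R : comRingType) (m : R -> Prop) : Prop :=
  [/\ is_ideal m, ~ m 1 &
      forall J : R -> Prop, is_ideal J -> (forall a, m a -> J a) ->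
        (forall a, J a <-> m a) \/ J 1].

Definition prod_ideal (R : comRingType) (I J : R -> Prop) (z : R) : Prop :=
  exists (n : nat) (f g : 'I_n -> R),
    [/\ forall k, I (f k), forall k, J (g k) & z = \sum_(k < n) f k * g k].

Definition gen_by_3 (R : comRingType) (K : R -> Prop) : Prop :=
  exists a b c : R, forall z, K z <-> exists r1 r2 r3 : R, z = r1 * a + r2 * b + r3 * c.

(* Localization at m, realized inside the fraction field of the domain R:
   S^{-1} I = { a / s : a in I, s notin m }.  R_m = loc m (fun _ => True). *)
Definition loc (R : idomainType) (m : R -> Prop) (I : R -> Prop)
    (z : {fraction R}) : Prop :=
  exists a s : R, [/\ I a, ~ m s & z = (FracField.tofrac a) / (FracField.tofrac s)].

Definition locR (R : idomainType) (m : R -> Prop) := loc m (fun _ => True).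

From HB Require Import structures.
From mathcomp Require Import all_boot all_order all_algebra.
From mathcomp Require Import ring.
From Stdlib Require Import Classical.
Set Implicit Arguments. Unset Strict Implicit. Unset Printing Implicit Defensive.
Import GRing.Theory.
Local Open Scope ring_scope.

(* Work in the local ring A = R_m with maximal ideal P = m R_m and put
   M = (IJ)_m.  A Nakayama-type exchange replaces the three generators of M
   one at a time by products, so that M = A i1j1 + A i2j2 + A i3j3.  Write
   i1j2 and i2j1 on these generators with coefficients u and v.  If u2 or v1
   is a unit, or if the 2x2 determinant expressing (i1+i2)j1, (i1+i2)j2 on
   i1j1, i2j2 is a unit, then M = x J_m + A i3j3 for x = i1, i2 or i1+i2.
   Otherwise 1 = det - v1 - u2 - v1 u2 + u1 v2 forces v2 to be a unit, and
   then M = j1 I_m + A i3j3.  When the x or y found is 0, M = A i3j3 is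
   cyclic and any non-zero x in I_m will do. *)

Local Notation "x %:F" := (@FracField.tofrac _ x).

Lemma maximal_ideal_mul_notin (R : comNzRingType) (m : R -> Prop) s t :
  maximal_ideal m -> ~ m s -> ~ m t -> ~ m (s * t).
Proof.
case=> [[m0 mD mM] _ m_max] ms mt mst.
pose K z := exists u r, m u /\ z = u + r * s.
have K_ideal : is_ideal K.
  split; first by exists 0, 0; rewrite mul0r addr0.
    move=> _ _ [u [r [mu ->]]] [u' [r' [mu' ->]]].
    by exists (u + u'), (r + r'); split; [exact: mD | ring].
  by move=> r _ [u [r' [mu ->]]]; exists (r * u), (r * r'); split; [exact: mM | ring].
have mK a : m a -> K a by exists a, 0; rewrite mul0r addr0.
case: (m_max K K_ideal mK) => [Km | [u [r [mu e1]]]].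
  by apply: ms; apply/Km; exists 0, 1; rewrite add0r mul1r.
apply: mt; have -> : t = t * u + r * (s * t) by rewrite -[t in LHS]mulr1 e1; ring.
by apply: mD; apply: mM.
Qed.

Section Localization.

Variables (R : idomainType) (m : R -> Prop).
Hypothesis m_max : maximal_ideal m.

Let m_ideal : is_ideal m. Proof. by case: m_max. Qed.
Let m_not1 : ~ m 1. Proof. by case: m_max. Qed.
Let True_ideal : is_ideal (fun _ : R => True). Proof. by []. Qed.
Local Hint Resolve m_ideal True_ideal : core.

Lemma tofrac_notin_neq0 s : ~ m s -> s%:F != 0.
Proof. by case: m_ideal => m0 _ _ ms; rewrite tofrac_eq0; apply: contra_notN ms => /eqP ->. Qed.

Lemma loc_tofrac (X : R -> Prop) a : X a -> loc m X a%:F.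
Proof. by exists a, 1; split=> //; rewrite tofrac1 divr1. Qed.

Lemma locR1 : locR m 1.
Proof. by rewrite -tofrac1; exact: loc_tofrac. Qed.

Lemma locR_loc (X : R -> Prop) u : loc m X u -> locR m u.
Proof. by case=> a [s [_ ms ->]]; exists a, s. Qed.

Lemma loc0 (X : R -> Prop) : is_ideal X -> loc m X 0.
Proof. by case=> X0 _ _; rewrite -tofrac0; exact: loc_tofrac. Qed.

Lemma locD (X : R -> Prop) u v : is_ideal X ->
  loc m X u -> loc m X v -> loc m X (u + v).
Proof.
case=> _ XD XM [a [s [Xa ms ->]]] [b [t [Xb mt ->]]].
exists (a * t + b * s), (s * t); split.
- by apply: XD; rewrite mulrC; apply: XM.
- exact: maximal_ideal_mul_notin.
- by rewrite tofracD !tofracM addf_div ?tofrac_notin_neq0.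
Qed.

Lemma locM (X : R -> Prop) r u : is_ideal X ->
  locR m r -> loc m X u -> loc m X (r * u).
Proof.
case=> _ _ XM [c [s' [_ ms' ->]]] [a [s [Xa ms ->]]].
exists (c * a), (s' * s); split; first exact: XM.
  exact: maximal_ideal_mul_notin.
by rewrite !tofracM mulf_div.
Qed.

Lemma locN (X : R -> Prop) u : is_ideal X -> loc m X u -> loc m X (- u).
Proof.
move=> X_ideal Xu; rewrite -mulN1r; apply: locM => //.
by rewrite -tofrac1 -tofracN; exact: loc_tofrac.
Qed.

Lemma locB (X : R -> Prop) u v : is_ideal X ->
  loc m X u -> loc m X v -> loc m X (u - v).
Proof. by move=> X_ideal Xu Xv; apply: locD => //; exact: locN. Qed.

(* [locR m] unfolds to [loc m (fun _ => True)], which hint patterns do not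
   see through. *)
Local Hint Resolve locR1 : core.
Local Hint Extern 0 (loc _ (fun _ => True) 1) => exact: locR1 : core.
Local Hint Extern 0 (loc _ _ 0) => by apply: loc0 : core.
Local Hint Extern 0 (locR _ 0) => exact: loc0 : core.

Lemma loc_max_not1 : ~ loc m m 1.
Proof.
move=> [a [s [ma ms e1]]].
have : a%:F = s%:F by rewrite -[a%:F](divfK (tofrac_notin_neq0 ms)) -e1 mul1r.
by move/eqP; rewrite tofrac_eq => /eqP ea; apply: ms; rewrite -ea.
Qed.

Definition loc_unit u := locR m u /\ ~ loc m m u.

Lemma locR_max_or_unit u : locR m u -> loc m m u \/ loc_unit u.
Proof. by move=> Au; case: (classic (loc m m u)) => uP; [left | right]. Qed.

Lemma loc_unit_neq0 u : loc_unit u -> u != 0.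
Proof. by case=> _ uP; apply: contra_notN uP => /eqP ->; exact: loc0. Qed.

Lemma loc_unit_inv u : loc_unit u -> locR m u^-1.
Proof.
move=> [[a [s [_ ms ->]]] aP].
have ma : ~ m a by move=> ma; apply: aP; exists a, s.
by exists s, a; split=> //; rewrite invfM invrK mulrC.
Qed.

Lemma loc_unit_1B e : loc m m e -> loc_unit (1 - e).
Proof.
move=> eP; split; first by apply: locB => //; exact: locR_loc eP.
by move=> e1P; apply: loc_max_not1; rewrite -(subrK e 1); exact: locD.
Qed.

Lemma loc_unit_offdiag a b c d : loc m m a -> locR m b -> locR m c -> loc m m d ->
  loc m m ((1 + a) * (1 + d) - b * c) -> loc_unit b.
Proof.
move=> aP Ab Ac dP detP; split=> // bP; apply: loc_max_not1.
have -> : 1 = (1 + a) * (1 + d) - b * c - a - d - a * d + c * b by ring.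
apply: locD => //; last exact: locM.
apply: locB => //; last by apply: locM => //; exact: locR_loc aP.
by apply: locB => //; exact: locB.
Qed.

Definition span3 (a b c z : {fraction R}) := exists r1 r2 r3,
  [/\ locR m r1, locR m r2, locR m r3 & z = r1 * a + r2 * b + r3 * c].

Lemma span3_rot a b c z : span3 a b c z -> span3 b c a z.
Proof. by case=> r1 [r2 [r3 [A1 A2 A3 ->]]]; exists r2, r3, r1; split=> //; ring. Qed.

Lemma span3_change_basis p1 p2 p3 w1 w2 a b c d e f z :
  locR m a -> locR m b -> locR m c -> locR m d -> locR m e -> locR m f ->
  loc_unit (a * e - b * d) ->
  w1 = a * p1 + b * p2 + c * p3 -> w2 = d * p1 + e * p2 + f * p3 ->
  span3 p1 p2 p3 z -> span3 w1 w2 p3 z.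
Proof.
move=> Aa Ab Ac Ad Ae Af det_unit -> -> [r1 [r2 [r3 [A1 A2 A3 ->]]]].
have det_neq0 := loc_unit_neq0 det_unit.
have Adet := loc_unit_inv det_unit.
(* Cramer's rule *)
pose t1 := (r1 * e - r2 * d) / (a * e - b * d).
pose t2 := (r2 * a - r1 * b) / (a * e - b * d).
have At1 : locR m t1 by rewrite /t1 mulrC; apply: locM => //; apply: locB => //; exact: locM.
have At2 : locR m t2 by rewrite /t2 mulrC; apply: locM => //; apply: locB => //; exact: locM.
have Ea : t1 * a + t2 * d = r1 by rewrite -[r1](mulfK det_neq0) /t1 /t2; ring.
have Eb : t1 * b + t2 * e = r2 by rewrite -[r2](mulfK det_neq0) /t1 /t2; ring.
exists t1, t2, (r3 - t1 * c - t2 * f); split=> //.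
  by apply: locB => //; [apply: locB => //|]; exact: locM.
by rewrite -Ea -Eb; ring.
Qed.

Lemma span3_exchange1 p1 p2 p3 w u1 u2 u3 z :
  loc_unit u1 -> locR m u2 -> locR m u3 -> w = u1 * p1 + u2 * p2 + u3 * p3 ->
  span3 p1 p2 p3 z -> span3 w p2 p3 z.
Proof.
move=> u1_unit Au2 Au3 Ew; apply: (span3_change_basis (d := 0) (e := 1) (f := 0)) Ew _ => //.
- exact: u1_unit.1.
- by rewrite mulr1 mulr0 subr0.
- by rewrite mul1r !mul0r add0r addr0.
Qed.

Lemma span3_exchange2 p1 p2 p3 w u1 u2 u3 z :
  locR m u1 -> loc_unit u2 -> locR m u3 -> w = u1 * p1 + u2 * p2 + u3 * p3 ->
  span3 p1 p2 p3 z -> span3 p1 w p3 z.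
Proof.
move=> Au1 u2_unit Au3 Ew; apply: (span3_change_basis (a := 1) (b := 0) (c := 0)) _ Ew => //.
- exact: u2_unit.1.
- by rewrite mul1r mul0r subr0.
- by rewrite mul1r !mul0r !addr0.
Qed.

Lemma span3_absorb g1 g2 g3 e r2 r3 q z : loc m m e -> locR m r2 -> locR m r3 ->
  g1 = e * g1 + r2 * g2 + r3 * g3 -> span3 g1 g2 g3 z -> span3 q g2 g3 z.
Proof.
move=> eP Ar2 Ar3 Eg1 [s1 [s2 [s3 [A1 A2 A3 ->]]]].
have e1_neq0 := loc_unit_neq0 (loc_unit_1B eP).
have Ae1 := loc_unit_inv (loc_unit_1B eP).
have : g1 * (1 - e) = r2 * g2 + r3 * g3 by rewrite mulrBr mulr1 {1}Eg1; ring.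
move/(canRL (mulfK e1_neq0)) => ->.
exists 0, (s2 + s1 * r2 / (1 - e)), (s3 + s1 * r3 / (1 - e)); split=> //.
- by apply: locD => //; apply: locM => //; rewrite mulrC; exact: locM.
- by apply: locD => //; apply: locM => //; rewrite mulrC; exact: locM.
- ring.
Qed.

Section ProductIdeal.

Variables I J : R -> Prop.
Hypotheses (I_ideal : is_ideal I) (J_ideal : is_ideal J).
Local Hint Resolve I_ideal J_ideal : core.

Local Notation M := (loc m (prod_ideal I J)).

Lemma loc_prod_mul i j : loc m I i -> loc m J j -> M (i * j).
Proof.
move=> [a [s [Ia ms ->]]] [b [t [Jb mt ->]]].
exists (a * b), (s * t); split; last by rewrite !tofracM mulf_div.
  by exists 1%N, (fun=> a), (fun=> b); split=> //; rewrite big_ord1.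
exact: maximal_ideal_mul_notin.
Qed.

Lemma loc_prod_ideal_ind (P : {fraction R} -> Prop) :
  P 0 -> (forall u v, P u -> P v -> P (u + v)) ->
  (forall i j, loc m I i -> loc m J j -> P (i * j)) -> forall z, M z -> P z.
Proof.
move=> P0 PD Pmul _ [_ [s [[n [f [g [If Jg ->]]]] ms ->]]].
rewrite rmorph_sum mulr_suml; apply: big_ind => // k _.
by rewrite rmorphM mulrAC; apply: Pmul; [exists (f k), s | exact: loc_tofrac].
Qed.

Definition loc_product q := exists i j, [/\ loc m I i, loc m J j & q = i * j].

Definition gen3 a b c := forall z, M z -> span3 a b c z.

Lemma gen3_rot a b c : gen3 a b c -> gen3 b c a.
Proof. by move=> gen z /gen /span3_rot. Qed.

Lemma loc_gen_by_3 : gen_by_3 (prod_ideal I J) ->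
  exists g1 g2 g3, [/\ M g1, M g2, M g3 & gen3 g1 g2 g3].
Proof.
move=> [a [b [c gen]]].
exists a%:F, b%:F, c%:F; split; try (apply: loc_tofrac; apply/gen).
- by exists 1, 0, 0; rewrite mul1r !mul0r !addr0.
- by exists 0, 1, 0; rewrite mul1r !mul0r add0r addr0.
- by exists 0, 0, 1; rewrite mul1r !mul0r !add0r.
move=> _ [w [s [/gen [r1 [r2 [r3 ->]]] ms ->]]].
exists (r1%:F / s%:F), (r2%:F / s%:F), (r3%:F / s%:F).
by split; [exists r1, s | exists r2, s | exists r3, s | rewrite !tofracD !tofracM; ring].
Qed.

Lemma gen3_exchange_product g1 g2 g3 : M g1 -> gen3 g1 g2 g3 ->
  exists q, loc_product q /\ gen3 q g2 g3.
Proof.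
move=> Mg1 gen.
case: (classic (exists q r1 r2 r3, [/\ loc_product q, loc_unit r1, locR m r2, locR m r3
                                     & q = r1 * g1 + r2 * g2 + r3 * g3])).
  move=> [q [r1 [r2 [r3 [Pq r1_unit Ar2 Ar3 Eq]]]]].
  by exists q; split=> // z /gen; exact: span3_exchange1 Eq.
move=> no_unit_coef.
(* Then every product, hence every element of M and in particular g1, has its
   first coordinate in P, so g1 is redundant. *)
pose small g := exists e r2 r3,
  [/\ loc m m e, locR m r2, locR m r3 & g = e * g1 + r2 * g2 + r3 * g3].
have [e [r2 [r3 [eP Ar2 Ar3 Eg1]]]] : small g1.
  apply: loc_prod_ideal_ind Mg1.
  - by exists 0, 0, 0; split=> //; rewrite !mul0r !addr0.
  - move=> _ _ [e [r2 [r3 [eP A2 A3 ->]]]] [e' [r2' [r3' [eP' A2' A3' ->]]]].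
    by exists (e + e'), (r2 + r2'), (r3 + r3'); split; [exact: locD.. | ring].
  - move=> i j Ii Jj; have [r1 [r2 [r3 [A1 A2 A3 Eij]]]] := gen _ (loc_prod_mul Ii Jj).
    case: (locR_max_or_unit A1) => [r1P | r1_unit]; first by exists r1, r2, r3.
    by case: no_unit_coef; exists (i * j), r1, r2, r3; split=> //; exists i, j.
exists 0; split; first by exists 0, 0; rewrite mul0r.
by move=> z /gen; exact: span3_absorb Eg1.
Qed.

Lemma gen3_products g1 g2 g3 : M g1 -> M g2 -> M g3 -> gen3 g1 g2 g3 ->
  exists p1 p2 p3 : {fraction R},
    [/\ loc_product p1, loc_product p2, loc_product p3 & gen3 p1 p2 p3].
Proof.
move=> Mg1 Mg2 Mg3 /(gen3_exchange_product Mg1) [p1 [P1 /gen3_rot]].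
move=> /(gen3_exchange_product Mg2) [p2 [P2 /gen3_rot]].
move=> /(gen3_exchange_product Mg3) [p3 [P3 /gen3_rot]].
by exists p1, p2, p3.
Qed.

Definition quot_cyclic (K : R -> Prop) x g :=
  forall z, M z -> exists r k, [/\ locR m r, loc m K k & z = r * g + x * k].

Definition mul_onto_mod (K L : R -> Prop) k x :=
  forall z, M z -> exists a b, [/\ loc m K a, loc m L b & z = k * a + x * b].

Definition cyclic_mod_xJ := exists x i j : {fraction R},
  x != 0 /\ loc m I x /\ loc m I i /\ loc m J j /\
  quot_cyclic J x (i * j) /\ mul_onto_mod I J j x.

Definition cyclic_mod_yI := exists y i j : {fraction R},
  y != 0 /\ loc m J y /\ loc m I i /\ loc m J j /\
  quot_cyclic I y (i * j) /\ mul_onto_mod J I i y.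

Lemma quot_cyclic_of_gen3 (K : R -> Prop) x ka kb g : is_ideal K ->
  loc m K ka -> loc m K kb -> gen3 (x * ka) (x * kb) g -> quot_cyclic K x g.
Proof.
move=> K_ideal Kka Kkb gen z /gen [t1 [t2 [t3 [A1 A2 A3 ->]]]].
exists t3, (t1 * ka + t2 * kb); split=> //; last by ring.
by apply: locD => //; exact: locM.
Qed.

Lemma quot_cyclic0 (K L : R -> Prop) x g : is_ideal L ->
  quot_cyclic K 0 g -> quot_cyclic L x g.
Proof.
move=> L_ideal cyc z /cyc [r [k [Ar _ ->]]].
by exists r, 0; split=> //; rewrite mul0r mulr0.
Qed.

Lemma mul_onto_of_quot_cyclic (K L : R -> Prop) a b x : is_ideal K ->
  loc m K a -> quot_cyclic L x (a * b) -> mul_onto_mod K L b x.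
Proof.
move=> K_ideal Ka cyc z /cyc [r [l [Ar Ll ->]]].
by exists (r * a), l; split=> //; [exact: locM | ring].
Qed.

Section NonzeroIdeal.

Hypothesis I_neq0 : exists a, I a /\ a != 0.

Lemma cyclic_mod_xJ_of_quot_cyclic x i j : loc m I x -> loc m I i -> loc m J j ->
  quot_cyclic J x (i * j) -> cyclic_mod_xJ.
Proof.
move=> Ix Ii Jj cyc.
have [x' [x'_neq0 Ix' cyc']] : exists x', [/\ x' != 0, loc m I x' & quot_cyclic J x' (i * j)].
  have [x0 | x_neq0] := eqVneq x 0; last by exists x.
  have [a [Ia a_neq0]] := I_neq0.
  exists a%:F; split; [by rewrite tofrac_eq0 | exact: loc_tofrac |].
  by rewrite x0 in cyc; exact: quot_cyclic0 cyc.
by exists x', i, j; do 5 split=> //; exact: mul_onto_of_quot_cyclic I_ideal Ii cyc'.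
Qed.

Lemma cyclic_mod_of_quot_cyclic_yI y i j : loc m J y -> loc m I i -> loc m J j ->
  quot_cyclic I y (i * j) -> cyclic_mod_xJ \/ cyclic_mod_yI.
Proof.
move=> Jy Ii Jj cyc; have [y0 | y_neq0] := eqVneq y 0.
  left; apply: (@cyclic_mod_xJ_of_quot_cyclic 0) Ii Jj _ => //.
  by rewrite y0 in cyc; exact: quot_cyclic0 cyc.
right; exists y, i, j; do 5 split=> //.
by apply: (mul_onto_of_quot_cyclic J_ideal Jj); rewrite mulrC.
Qed.

Lemma alternatives_of_gen3_products p1 p2 p3 :
  loc_product p1 -> loc_product p2 -> loc_product p3 -> gen3 p1 p2 p3 ->
  cyclic_mod_xJ \/ cyclic_mod_yI.
Proof.
move=> [i1 [j1 [Ii1 Jj1 ->]]] [i2 [j2 [Ii2 Jj2 ->]]] [i3 [j3 [Ii3 Jj3 ->]]] gen.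
have mod_xJ x ja jb : loc m I x -> loc m J ja -> loc m J jb ->
    gen3 (x * ja) (x * jb) (i3 * j3) -> cyclic_mod_xJ \/ cyclic_mod_yI.
  move=> Ix Jja Jjb genx; left; apply: cyclic_mod_xJ_of_quot_cyclic Ix Ii3 Jj3 _.
  exact: quot_cyclic_of_gen3 genx.
have [u1 [u2 [u3 [Au1 Au2 Au3 Eu]]]] := gen _ (loc_prod_mul Ii1 Jj2).
have [v1 [v2 [v3 [Av1 Av2 Av3 Ev]]]] := gen _ (loc_prod_mul Ii2 Jj1).
have [u2P | u2_unit] := locR_max_or_unit Au2; last first.
  by apply: (mod_xJ i1 j1 j2) => // z /gen; exact: span3_exchange2 Eu.
have [v1P | v1_unit] := locR_max_or_unit Av1; last first.
  by apply: (mod_xJ i2 j1 j2) => // z /gen; exact: span3_exchange1 Ev.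
have Adet : locR m ((1 + v1) * (1 + u2) - v2 * u1).
  by apply: locB => //; apply: locM => //; exact: locD.
have [detP | det_unit] := locR_max_or_unit Adet; last first.
  apply: (mod_xJ (i1 + i2) j1 j2) => //; first exact: locD.
  move=> z /gen; apply: (span3_change_basis (a := 1 + v1) (b := v2) (c := v3)
                           (d := u1) (e := 1 + u2) (f := u3)) => //; try exact: locD.
  - by rewrite mulrDl Ev; ring.
  - by rewrite mulrDl Eu; ring.
have v2_unit := loc_unit_offdiag v1P Av2 Au1 u2P detP.
have genJ : gen3 (j1 * i1) (j1 * i2) (i3 * j3).
  by rewrite mulrC [j1 * i2]mulrC => z /gen; exact: span3_exchange2 Ev.
exact: cyclic_mod_of_quot_cyclic_yI Jj1 Ii3 Jj3 (quot_cyclic_of_gen3 I_ideal Ii1 Ii2 genJ).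
Qed.

End NonzeroIdeal.

End ProductIdeal.

End Localization.

Theorem lemma4p9 (R : idomainType) (I J m : R -> Prop) :
  nonzero_ideal I -> nonzero_ideal J -> gen_by_3 (prod_ideal I J) ->
  maximal_ideal m ->
  (exists x i j : {fraction R},
     x != 0 /\ loc m I x /\ loc m I i /\ loc m J j /\
      (* (IJ)_m / x J_m is cyclic, generated by the class of i*j *)
      (forall z, loc m (prod_ideal I J) z ->
         exists r j', [/\ locR m r, loc m J j' & z = r * (i * j) + x * j']) /\
      (* the map I_m / x R_m -> (IJ)_m / x J_m, multiplication by j, is onto *)
      (forall z, loc m (prod_ideal I J) z ->
         exists i' j', [/\ loc m I i', loc m J j' & z = j * i' + x * j']))
  \/
  (exists y i j : {fraction R},
     y != 0 /\ loc m J y /\ loc m I i /\ loc m J j /\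
      (* (IJ)_m / y I_m is cyclic, generated by the class of i*j *)
      (forall z, loc m (prod_ideal I J) z ->
         exists r i', [/\ locR m r, loc m I i' & z = r * (i * j) + y * i']) /\
      (* the map J_m / y R_m -> (IJ)_m / y I_m, multiplication by i, is onto *)
      (forall z, loc m (prod_ideal I J) z ->
         exists j' i', [/\ loc m J j', loc m I i' & z = i * j' + y * i'])).
Proof.
move=> [I_ideal I_neq0] [J_ideal _] IJ_gen3 m_max.
have [g1 [g2 [g3 [Mg1 Mg2 Mg3 gen]]]] := loc_gen_by_3 m_max IJ_gen3.
have [p1 [p2 [p3 [P1 P2 P3 genp]]]] := gen3_products m_max I_ideal J_ideal Mg1 Mg2 Mg3 gen.
exact (alternatives_of_gen3_products m_max I_ideal J_ideal I_neq0 P1 P2 P3 genp).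
Qed.
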